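(* If there exists a continuum that is not coastal, then there exists a continuum $Y$ and a null-aposyndetic point $y\in Y$ such that $Y$ is not coastal at $y$.
   Context: A continuum is a nondegenerate compact connected Hausdorff space. $\kappa(x;p)$ denotes the union of all subcontinua $M\neq X$ of $X$ with $x\in M$ and $p\notin M$. $X$ is coastal at $x$ if $\kappa(x;p)$ is dense in $X$ for some $p\neq x$, and coastal if it is coastal at every point. A point $x\in X$ is null-aposyndetic if no proper subcontinuum of $X$ contains $x$ in its interior. *)

From HB Require Import structures.
From mathcomp Require Import all_boot all_order.
From mathcomp Require Import all_classical topology.
Set Implicit Arguments. Unset Strict Implicit. Unset Printing Implicit Defensive.
Local Open Scope classical_set_scope.

Definition is_continuum (X : topologicalType) : Prop :=
  hausdorff_space X /\ compact [set: X] /\ connected [set: X] /\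
  exists x y : X, x <> y.

(* A subcontinuum of X: a subset that is a continuum in the subspace topology
   (compact, connected, nondegenerate; Hausdorff is inherited). *)
Definition subcontinuum (X : topologicalType) (M : set X) : Prop :=
  compact M /\ connected M /\ exists a b : X, M a /\ M b /\ a <> b.

Definition kappa (X : topologicalType) (x p : X) : set X :=
  [set z | exists M : set X,
     [/\ subcontinuum M, M <> [set: X], M x, ~ M p & M z]].

Definition coastal_at (X : topologicalType) (x : X) : Prop :=
  exists p : X, p <> x /\ closure (kappa x p) = [set: X].

Definition coastal (X : topologicalType) : Prop :=
  forall x : X, coastal_at x.

Definition null_aposyndetic (X : topologicalType) (x : X) : Prop :=
  forall M : set X, subcontinuum M -> M <> [set: X] -> ~ (interior M) x.

(* Pick x at which X is not coastal; if x is null-aposyndetic we are done.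
   Otherwise apply Zorn's lemma to the proper subcontinua containing x, ordered by
   M <= N iff M = N or M is contained in the interior of N.  Along a chain with no
   largest element the closure of the union is an upper bound: by compactness the
   union misses some point p, and the closure cannot be X, for the union lies in
   kappa(x;p), which is not dense.  Collapse a maximal M to a point y.  A proper
   subcontinuum of X/M with y in its interior pulls back to one with M in its
   interior, contradicting maximality; and the pull-backs of the subcontinua making
   up kappa(y;p) lie in kappa(x;p), which contains M, so X/M is not coastal at y. *)

From mathcomp Require Import all_boot all_order.
From mathcomp Require Import all_classical topology.
Set Implicit Arguments. Unset Strict Implicit. Unset Printing Implicit Defensive.
Local Open Scope classical_set_scope.
Local Open Scope quotient_scope.

Lemma compact_separate_point_closed (X : topologicalType) (C : set X) (a : X) :
  hausdorff_space X -> compact [set: X] -> closed C -> ~ C a ->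
  exists A B, [/\ open A, open B, A a, C `<=` B & A `&` B = set0].
Proof.
move=> hX cX cC nCa.
have Ca_nbhs : nbhs a (~` C) by apply: open_nbhs_nbhs; split=> //; exact: closed_openC.
have [V Va clVC] := compact_regular hX cX (@filterT _ (nbhs a) _) Ca_nbhs.
exists V°, (~` closure V); split.
- exact: open_interior.
- exact/closed_openC/closed_closure.
- exact: Va.
- by move=> c Cc /clVC.
- by apply/seteqP; split=> // z [/interior_subset Vz]; apply; exact: subset_closure.
Qed.

Lemma closed_separated (X : topologicalType) (A B : set X) :
  closed (A `|` B) -> separated A B -> closed A.
Proof.
move=> cAB [clAB _]; rewrite closure_id; apply/seteqP; split; first exact: subset_closure.
move=> z clAz; have : (A `|` B) z.
  by rewrite ((closure_id _).1 cAB); apply: closureS clAz => ? ?; left.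
by case=> // Bz; have : (closure A `&` B) z by []; rewrite clAB.
Qed.

Lemma closed_disjoint_separated (X : topologicalType) (A B : set X) :
  closed A -> closed B -> A `&` B = set0 -> separated A B.
Proof. by move=> cA cB AB; rewrite /separated -!(closure_id _).1. Qed.

Section Collapse.
Context {X : topologicalType} (M : set X).

Definition collapse_rel (a b : X) : bool := `[< a = b \/ M a /\ M b >].

Lemma collapse_rel_refl : reflexive collapse_rel.
Proof. by move=> a; apply/asboolP; left. Qed.

Lemma collapse_rel_sym : symmetric collapse_rel.
Proof. by move=> a b; apply/asboolP/asboolP => -[->|[]]; by [left|right]. Qed.

Lemma collapse_rel_trans : transitive collapse_rel.
Proof.
by move=> b a c /asboolP[->//|[Ma Mb]] /asboolP[<-|[_ Mc]]; apply/asboolP; right.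
Qed.

Canonical collapse_equiv :=
  EquivRel collapse_rel collapse_rel_refl collapse_rel_sym collapse_rel_trans.

Definition collapse := quotient_topology {eq_quot collapse_equiv}.

Definition collapse_pi : X -> collapse := \pi.

Local Notation pi := collapse_pi.

Lemma collapse_piP a b : pi a = pi b <-> a = b \/ M a /\ M b.
Proof. by split=> [/eqmodP/asboolP//|?]; apply/eqmodP/asboolP. Qed.

Lemma collapse_pi_surj (u : collapse) : exists a, pi a = u.
Proof. by exists (repr u); rewrite /collapse_pi reprK. Qed.

Lemma image_collapse_setT : pi @` [set: X] = [set: collapse].
Proof. by apply/seteqP; split=> // u _; have [a <-] := collapse_pi_surj u; exists a. Qed.

Lemma continuous_collapse_pi : continuous pi.
Proof. exact: pi_continuous. Qed.

Lemma collapse_openE (U : set collapse) : open U = open (pi @^-1` U).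
Proof. by []. Qed.

Lemma collapse_closed (U : set collapse) : closed (pi @^-1` U) -> closed U.
Proof. by move=> cU; rewrite -openC collapse_openE preimage_setC openC. Qed.

Lemma closed_collapse_preimage (U : set collapse) : closed U -> closed (pi @^-1` U).
Proof. by move=> cU; apply: preimage_closed cU => z _; exact: continuous_collapse_pi. Qed.

Definition saturated (A : set X) := M `<=` A \/ A `<=` ~` M.

Lemma disjoint_saturated A B : M `<=` B -> A `&` B = set0 -> saturated A.
Proof. by move=> MB AB; right=> z Az /MB Bz; have : (A `&` B) z by []; rewrite AB. Qed.

Lemma preimage_image_saturated A : saturated A -> pi @^-1` (pi @` A) = A.
Proof.
move=> sA; apply/seteqP; split=> [z [a Aa /collapse_piP[<-//|[Ma Mz]]]|z Az].
- by case: sA => [/(_ z Mz)|/(_ a Aa Ma)].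
- by exists z.
Qed.

Lemma open_image_saturated A : saturated A -> open A -> open (pi @` A).
Proof. by move=> sA; rewrite collapse_openE preimage_image_saturated. Qed.

Lemma closed_image_saturated A : saturated A -> closed A -> closed (pi @` A).
Proof. by move=> sA cA; apply: collapse_closed; rewrite preimage_image_saturated. Qed.

Lemma image_saturated_disjoint A B : saturated A -> saturated B ->
  A `&` B = set0 -> pi @` A `&` pi @` B = set0.
Proof.
move=> sA _ AB; apply/seteqP; split=> // _ [[a Aa <-] [b Bb /esym eab]].
have Ab : A b by rewrite -(preimage_image_saturated sA); exists a.
by have : (A `&` B) b by []; rewrite AB.
Qed.

Lemma hausdorff_collapse : hausdorff_space X -> compact [set: X] -> closed M ->
  hausdorff_space collapse.
Proof.
move=> hX cX cM.
have sep a b : ~ M a -> pi a <> pi b -> exists A B,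
    [/\ open A, open B, saturated A & saturated B] /\ [/\ A a, B b & A `&` B = set0].
  move=> nMa ab.
  have cMb : closed (M `|` [set b]).
    exact/closedU/accessible_closed_set1/hausdorff_accessible.
  have nMba : ~ (M `|` [set b]) a by case=> // eab; apply: ab; rewrite eab.
  have [A [B [oA oB Aa MbB AB]]] := compact_separate_point_closed hX cX cMb nMba.
  have MB : M `<=` B by move=> z Mz; apply: MbB; left.
  exists A, B; split; split=> //; last by apply: MbB; right.
  - exact: disjoint_saturated MB AB.
  - by left.
rewrite open_hausdorff => u v.
have [a <-] := collapse_pi_surj u; have [b <-] := collapse_pi_surj v.
move=> /eqP uv.
suff [A [B [[oA oB sA sB] [Aa Bb AB]]]] : exists A B,
    [/\ open A, open B, saturated A & saturated B] /\ [/\ A a, B b & A `&` B = set0].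
  exists (pi @` A, pi @` B); first by rewrite !in_setE; split; [exists a|exists b].
  split; [exact: open_image_saturated|exact: open_image_saturated|].
  by apply/eqP/image_saturated_disjoint.
have [Ma|nMa] := pselect (M a); last exact: sep nMa uv.
have nMb : ~ M b by move=> Mb; apply: uv; apply/collapse_piP; right.
have [B [A [[oB oA sB sA] [Bb Aa BA]]]] := sep b a nMb (nesym uv).
by exists A, B; split; split=> //; rewrite setIC.
Qed.

Lemma compact_collapse : compact [set: X] -> compact [set: collapse].
Proof.
move=> cX; rewrite -image_collapse_setT; apply: continuous_compact => //.
exact: continuous_subspaceT continuous_collapse_pi.
Qed.

Lemma connected_collapse : connected [set: X] -> connected [set: collapse].
Proof.
move=> cX; rewrite -image_collapse_setT; apply: connected_continuous_connected => //.
exact: continuous_subspaceT continuous_collapse_pi.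
Qed.

Lemma connected_collapse_preimage (N : set collapse) : connected M ->
  M `<=` pi @^-1` N -> closed N -> connected N -> connected (pi @^-1` N).
Proof.
move=> cM MN clN cN; apply/connectedP => E [E0 NE sE].
have clNpre := closed_collapse_preimage clN.
have clE0 : closed (E false) by apply: closed_separated sE; rewrite -NE.
have clE1 : closed (E true).
  by apply: (@closed_separated _ _ (E false)); rewrite 1?separatedC // setUC -NE.
have E01 := separated_disjoint sE.
have [sE0 sE1] : saturated (E false) /\ saturated (E true).
  have MEE : M `<=` E false `|` E true by rewrite -NE.
  have [ME|ME] := connected_subset sE MEE cM.
  - by split; [left|apply: (disjoint_saturated ME); rewrite setIC].
  - by split; [exact: (disjoint_saturated ME)|left].
move/connectedP: cN => /(_ (fun b => pi @` E b)); apply; split.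
- by move=> b; have [z Ez] := E0 b; exists (pi z), z.
- by rewrite -image_setU -NE image_preimage // image_collapse_setT.
- apply: closed_disjoint_separated; [exact: closed_image_saturated..|].
  exact: image_saturated_disjoint.
Qed.

Lemma collapse_dense_preimage (A : set X) (K : set collapse) : M `<=` A ->
  pi @^-1` K `<=` A -> closure K = [set: collapse] -> closure A = [set: X].
Proof.
move=> MA KA Kdense; apply/seteqP; split=> // w _; apply: contrapT => nAw.
have sO : saturated (~` closure A).
  apply: (@disjoint_saturated _ (closure A)); last by rewrite setICl.
  exact: subset_trans MA (@subset_closure _ A).
have oO : open (~` closure A) by exact/closed_openC/closed_closure.
have : closure K (pi w) by rewrite Kdense.
case/(_ (pi @` ~` closure A)) => [|u [Ku [o nAo ou]]].
  by apply: open_nbhs_nbhs; split; [exact: open_image_saturated|exists w].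
by apply: nAo; apply/subset_closure/KA; rewrite /= ou.
Qed.

End Collapse.

Definition proper_subcontinuum_at (X : topologicalType) (x : X) (M : set X) :=
  [/\ subcontinuum M, M <> [set: X] & M x].

Lemma proper_subcontinuum_not_open (X : topologicalType) (M : set X) :
  is_continuum X -> subcontinuum M -> M <> [set: X] -> ~ open M.
Proof.
move=> [hX [_ [cX _]]] [cM [_ [a [_ [Ma _]]]]] MT oM; apply: MT.
have clM : closed M := compact_closed hX cM.
by apply: cX; [exists a|exists M; rewrite ?setTI..].
Qed.

Definition interior_le (X : topologicalType) (M N : set X) := M = N \/ M `<=` N°.

Lemma interior_le_refl (X : topologicalType) (M : set X) : interior_le M M.
Proof. by left. Qed.

Lemma interior_le_subset (X : topologicalType) (M N : set X) :
  interior_le M N -> M `<=` N.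
Proof. by case=> [->//|MN]; exact: subset_trans MN (@interior_subset _ N). Qed.

Lemma interior_le_trans (X : topologicalType) (L M N : set X) :
  interior_le L M -> interior_le M N -> interior_le L N.
Proof.
case=> [->//|LM] [<-|MN]; right=> //.
exact: subset_trans LM (subset_trans (@interior_subset _ M) MN).
Qed.

Lemma compact_interior_chain_bigcup_neqT (X : topologicalType) (C : set (set X)) :
  compact [set: X] -> C !=set0 -> total_on C (@subset X) ->
  (forall m, C m -> m <> [set: X]) -> (forall m, C m -> exists2 s, C s & m `<=` s°) ->
  \bigcup_(m in C) m <> [set: X].
Proof.
move=> cX [m0 Cm0] tot Cproper succ UT.
pose F := filter_from C (fun m => ~` m°).
have PF : ProperFilter F.
  apply: filter_from_proper; first apply: filter_from_filter; first by exists m0.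
  - move=> i j Ci Cj; have [ij|ji] := tot i j Ci Cj.
    + by exists j => // z nj; split=> // iz; apply/nj/(interiorS ij).
    + by exists i => // z ni; split=> // jz; apply/ni/(interiorS ji).
  - move=> m Cm; have /setTPn [z nz] : m != [set: X] by apply/eqP/Cproper.
    by exists z => /interior_subset.
have [p [_ Fp]] : [set: X] `&` cluster F !=set0 by apply: cX; exists m0.
have [m Cm mp] : (\bigcup_(m in C) m) p by rewrite UT.
have [s Cs ms] := succ m Cm.
have Fs : F (~` s°) by exists s.
have snbhs : nbhs p s° by apply: open_nbhs_nbhs; split; [exact: open_interior|exact: ms].
by have [z [nz sz]] := Fp _ _ Fs snbhs.
Qed.

Lemma closure_bigcup_proper_subcontinuum (X : topologicalType) (x : X)
    (C : set (set X)) :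
  is_continuum X -> ~ coastal_at x -> C !=set0 ->
  (forall m, C m -> proper_subcontinuum_at x m) -> \bigcup_(m in C) m <> [set: X] ->
  proper_subcontinuum_at x (closure (\bigcup_(m in C) m)).
Proof.
move=> [_ [cX _]] ncx [m0 Cm0] CP /eqP /setTPn [p Up].
set U := \bigcup_(m in C) m.
have [[_ [_ [a [b [m0a [m0b ab]]]]]] _ m0x] := CP m0 Cm0.
split; last by apply: subset_closure; exists m0.
- split; first exact: (subclosed_compact (@closed_closure _ U) cX).
  split.
    apply/connected_closure/bigcup_connected; first by exists x => m /CP[].
    by move=> m /CP[[_ []]].
  by exists a, b; split; [|split=> //]; apply: subset_closure; exists m0.
- move=> clUT; apply: ncx; exists p; split.
    by move=> px; apply: Up; rewrite px; exists m0.
  apply/seteqP; split=> // z _; have : closure U z by rewrite clUT.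
  apply: closureS => w [m Cm mw]; exists m; have [? ? ?] := CP m Cm.
  by split=> // mp; apply: Up; exists m.
Qed.

Lemma interior_chain_upper_bound (X : topologicalType) (x : X) (C : set (set X)) :
  is_continuum X -> ~ coastal_at x -> C !=set0 ->
  (forall m, C m -> proper_subcontinuum_at x m) -> total_on C (@interior_le X) ->
  exists2 L, proper_subcontinuum_at x L & forall m, C m -> interior_le m L.
Proof.
move=> Xc ncx C0 CP tot.
have [[L CL Lmax]|nomax] :=
  pselect (exists2 L, C L & forall m, C m -> interior_le m L).
  by exists L => //; exact: CP L CL.
have succ m : C m -> exists2 s, C s & m `<=` s°.
  move=> Cm; apply: contrapT => nosucc; apply: nomax; exists m => // s Cs.
  have [//|[->|ms]] := tot s m Cs Cm; first exact: interior_le_refl.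
  by exfalso; apply: nosucc; exists s.
have UT : \bigcup_(m in C) m <> [set: X].
  apply: compact_interior_chain_bigcup_neqT succ => //; first by case: Xc => _ [].
    move=> s t Cs Ct.
    by have [/interior_le_subset|/interior_le_subset] := tot s t Cs Ct; [left|right].
  by move=> m /CP[].
exists (closure (\bigcup_(m in C) m)).
  exact: closure_bigcup_proper_subcontinuum.
move=> m Cm; right; have [s Cs ms] := succ m Cm.
apply: (subset_trans ms); apply/interiorS/(subset_trans _ (@subset_closure _ _)).
by move=> z sz; exists s.
Qed.

Lemma exists_interior_maximal (X : topologicalType) (x : X) :
  is_continuum X -> ~ coastal_at x -> (exists N, proper_subcontinuum_at x N) ->
  exists2 M, proper_subcontinuum_at x M &
    forall N, proper_subcontinuum_at x N -> ~ M `<=` N°.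
Proof.
move=> Xc ncx [N0 N0P].
pose T := {M : set X | proper_subcontinuum_at x M}.
pose R (s t : T) := `[< interior_le (sval s) (sval t) >].
have [t|s t u /asboolP st /asboolP tu|A Atot|[M MP] Mmax] :=
    @ZL_preorder T (exist _ N0 N0P) R.
- exact/asboolP/interior_le_refl.
- exact/asboolP/(interior_le_trans st tu).
- have [[a Aa]|A0] := pselect (A !=set0); last first.
    by exists (exist _ N0 N0P) => s As; exfalso; apply: A0; exists s.
  have [||s t [c Ac <-] [d Ad <-]|L LP Lub] :=
      @interior_chain_upper_bound X x (sval @` A) Xc ncx.
  + by exists (sval a), a.
  + by move=> _ [s _ <-]; exact: svalP.
  + by have [/asboolP|/asboolP] := Atot c d Ac Ad; [left|right].
  + by exists (exist _ L LP) => s As; apply/asboolP/Lub; exists s.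
- exists M => // N NP MN.
  have /asboolP /= NM := Mmax (exist _ N NP) (asboolT (or_intror MN)).
  have [Msub MT _] := MP; apply: (proper_subcontinuum_not_open Xc Msub MT).
  rewrite openE; case: NM => [NM|NM]; first by rewrite NM in MN.
  exact: subset_trans MN (subset_trans (@interior_subset _ N) NM).
Qed.

Section CollapseSubcontinuum.
Variables (X : topologicalType) (x : X) (M : set X).
Hypotheses (X_continuum : is_continuum X) (M_proper : proper_subcontinuum_at x M).

Local Notation pi := (collapse_pi M).

Lemma collapse_continuum : is_continuum (collapse M).
Proof.
have [hX [cX [connX _]]] := X_continuum; have [[cM _] /eqP /setTPn [z nMz] Mx] := M_proper.
split; first exact: hausdorff_collapse hX cX (compact_closed hX cM).
split; first exact: compact_collapse cX.
split; first exact: connected_collapse connX.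
by exists (pi x), (pi z) => /collapse_piP[xz|[_ Mz]]; apply: nMz; rewrite -?xz.
Qed.

Lemma subset_collapse_preimage (N : set (collapse M)) : N (pi x) -> M `<=` pi @^-1` N.
Proof.
by have [_ _ Mx] := M_proper; move=> Nx m Mm; rewrite /= (collapse_piP M m x).2 //; right.
Qed.

Lemma preimage_proper_subcontinuum (N : set (collapse M)) :
  proper_subcontinuum_at (pi x) N -> proper_subcontinuum_at x (pi @^-1` N).
Proof.
move=> [[cN [connN _]] NT Nx].
have [hX [cX _]] := X_continuum; have [[cM [connM [a [b [Ma [Mb ab]]]]]] _ _] := M_proper.
have MN := subset_collapse_preimage Nx.
have clN : closed N.
  exact: compact_closed (hausdorff_collapse hX cX (compact_closed hX cM)) cN.
split=> //.
- split; first exact: subclosed_compact (closed_collapse_preimage clN) cX _.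
  split; first exact: connected_collapse_preimage connM MN clN connN.
  by exists a, b; split; [exact: MN|split; [exact: MN|]].
- move=> NpreT; apply: NT.
  by rewrite -[N](image_preimage _ (image_collapse_setT M)) NpreT image_collapse_setT.
Qed.

Lemma preimage_collapse_kappa z : pi @^-1` kappa (pi x) (pi z) `<=` kappa x z.
Proof.
move=> w [N [Nsub NT Nx Nz Nw]].
have [Npre NpreT Nprex] := preimage_proper_subcontinuum (And3 Nsub NT Nx).
by exists (pi @^-1` N); split.
Qed.

Lemma null_aposyndetic_collapse :
  (forall N, proper_subcontinuum_at x N -> ~ M `<=` N°) -> null_aposyndetic (pi x).
Proof.
move=> Mmax N Nsub NT Nix.
apply: (Mmax (pi @^-1` N)).
  exact: preimage_proper_subcontinuum (And3 Nsub NT (interior_subset Nix)).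
have oNi : open (pi @^-1` N°).
  by apply: open_comp (@open_interior _ N) => z _; exact: continuous_collapse_pi.
apply: (@subset_trans _ (pi @^-1` N°)); first exact: subset_collapse_preimage.
by rewrite -open_subsetE // => w /interior_subset.
Qed.

Lemma collapse_not_coastal_at : ~ coastal_at x -> ~ coastal_at (pi x).
Proof.
move=> ncx [p [px dense]]; have [z zp] := collapse_pi_surj p.
have [Msub MT Mx] := M_proper.
have nMz : ~ M z by move=> Mz; apply: px; rewrite -zp; apply/collapse_piP; right.
apply: ncx; exists z; split; first by move=> zx; apply: nMz; rewrite zx.
apply: (@collapse_dense_preimage _ M _ (kappa (pi x) (pi z))); last by rewrite zp.
- by move=> m Mm; exists M; split.
- exact: preimage_collapse_kappa.
Qed.

End CollapseSubcontinuum.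

Theorem mainTheorem12 :
  (exists X : topologicalType, is_continuum X /\ ~ coastal X) ->
  exists (Y : topologicalType) (y : Y),
    [/\ is_continuum Y, null_aposyndetic y & ~ coastal_at y].
Proof.
move=> [X [Xc ncX]].
have [x ncx] := (existsNP _).2 ncX.
have [nax|nnax] := pselect (null_aposyndetic x); first by exists X, x.
have N0 : exists N, proper_subcontinuum_at x N.
  apply: contrapT => noN; apply: nnax => N Nsub NT /interior_subset Nx.
  by apply: noN; exists N.
have [M MP Mmax] := exists_interior_maximal Xc ncx N0.
exists (collapse M), (collapse_pi M x); split.
- exact: collapse_continuum MP.
- exact: null_aposyndetic_collapse.
- exact: collapse_not_coastal_at.
Qed.
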